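(* Let $M\in\mathrm{M}_n(\mathbb{K})$ with minimal polynomial $\mu_M=f_1^{m_1}\cdots f_s^{m_s}$ and characteristic polynomial $\chi_M=f_1^{n_1}\cdots f_s^{n_s}$, where $f_1,\dots,f_s\in\mathbb{K}[x]$ are pairwise distinct monic irreducible polynomials and $m_i,n_i\ge1$. For $i\in\{1,\dots,s\}$ let $d_i=\dim_{\mathbb{K}}\ker(f_i^{m_i}(M))$ (which equals $n_i\deg f_i$) and let $P_i\in\mathrm{M}_{d_i\times n}(\mathbb{K})$ be a matrix whose rows form a $\mathbb{K}$-basis of $\ker(f_i^{m_i}(M))\subseteq\mathbb{K}^n$. Let $\mathcal{C}$ be an $M$-code with parameters $[n,k]$, $k\ge1$; let $k_i=\dim_{\mathbb{L}}(\mathcal{C}\cap\ker(f_i^{m_i}(M)))$ (kernel taken in $\mathbb{L}^n$), $\mathcal{C}_i=\{c\in\mathbb{L}^{d_i} : cP_i\in\mathcal{C}\cap\ker(f_i^{m_i}(M))\}$, and $\Lambda=\{i : \mathcal{C}\cap\ker(f_i^{m_i}(M))\neq\{0\}\}$. Then for all $r\in\{1,\dots,k\}$, $$M_r(\mathcal{C})=\min_{\substack{\sum_{i\in\Lambda}r_i=r\\ r_i\in\{0,\dots,k_i\}}}\sum_{i\in\Lambda}M_{r_i}(\mathcal{C}_i)=\min_{\substack{\sum_{i\in\Lambda}r_i=r\\ r_i\in\{0,\dots,k_i\}}}\sum_{i\in\Lambda}M_{r_i}(\mathcal{C}\cap\ker(f_i^{m_i}(M))),$$ for all $i\in\Lambda$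 and $r_i\in\{1,\dots,k_i\}$ we have $M_{r_i}(\mathcal{C}_i)=M_{r_i}(\mathcal{C}\cap\ker(f_i^{m_i}(M)))\le n_i\deg(f_i)-k_i+r_i$, and for all $r\in\{1,\dots,k\}$, $$M_r(\mathcal{C})\le\min_{\substack{\sum_{i\in\Lambda}r_i=r\\ r_i\in\{0,\dots,k_i\}}}\Big(\sum_{i\in\Lambda,\ r_i\ne0}(n_i\deg(f_i)-k_i)\Big)+r.$$ In particular $M_1(\mathcal{C})=\min_{i\in\Lambda}M_1(\mathcal{C}_i)\le\min_{i\in\Lambda}(n_i\deg(f_i)-k_i)+1$ and $M_k(\mathcal{C})=\sum_{i\in\Lambda}M_{k_i}(\mathcal{C}_i)\le\sum_{i\in\Lambda}n_i\deg(f_i)$.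
   Context: Let $\mathbb{L}/\mathbb{K}$ be a field extension of finite degree $m$, and $n\ge 1$ an integer with $m\ge n$ (standing assumption). Vectors are row vectors; for a matrix $A$ with entries in $\mathbb{K}$, $\ker(A)$ denotes $\{c : cA^t=0\}$ in $\mathbb{K}^n$ or in $\mathbb{L}^n$ as indicated. Fix a $\mathbb{K}$-basis $\mathcal{B}$ of $\mathbb{L}$; for $c=(c_1,\dots,c_n)\in\mathbb{L}^n$ let $M_{\mathcal{B}}(c)\in\mathrm{M}_{m\times n}(\mathbb{K})$ be the matrix whose $j$-th column is the coordinate vector of $c_j$ in $\mathcal{B}$. The rank support $\mathrm{Rsupp}(c)\subseteq\mathbb{K}^n$ is the $\mathbb{K}$-row space of $M_{\mathcal{B}}(c)$, and $\mathrm{wt}_R(c)=\dim_{\mathbb{K}}\mathrm{Rsupp}(c)$. For an $\mathbb{L}$-subspace $\mathcal{D}\subseteq\mathbb{L}^n$, $\mathrm{Rsupp}(\mathcal{D})$ is the $\mathbb{K}$-span of all $\mathrm{Rsupp}(d)$, $d\in\mathcal{D}$, and $\mathrm{wt}_R(\mathcal{D})=\dim_{\mathbb{K}}\mathrm{Rsupp}(\mathcal{D})$. A linear $[n,k]$ code is a $k$-dimensional $\mathbb{L}$-subspace $\mathcal{C}\subseteq\mathbb{L}^n$; for $1\le r\le k$, $M_r(\mathcal{C})=\min\{\mathrm{wt}_R(\mathcal{D}) : \mathcal{D}\subseteq\mathcal{C},\ \dim_{\mathbb{L}}\mathcal{D}=r\}$, and $M_0(\mathcal{C})=0$ by convention.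 For $M\in\mathrm{M}_n(\mathbb{K})$, a linear code $\mathcal{C}\subseteq\mathbb{L}^n$ is an $M$-code if $cM^t\in\mathcal{C}$ for all $c\in\mathcal{C}$. *)

From HB Require Import structures.
From mathcomp Require Import all_boot all_order all_algebra all_field.
From mathcomp Require Import boolp.
Set Implicit Arguments. Unset Strict Implicit. Unset Printing Implicit Defensive.
Import GRing.Theory.
Local Open Scope ring_scope.

(* least natural number satisfying a (classical) predicate; 0 if none *)
Lemma pmin_ex (P : nat -> Prop) : (exists n, P n) -> exists n, `[< P n >].
Proof. by case=> n Pn; exists n; apply/asboolP. Qed.

Definition pmin (P : nat -> Prop) : nat :=
  match pselect (exists n, P n) with
  | left H => ex_minn (pmin_ex H)
  | right _ => 0%N
  end.

Section RankMetric.
Variables (K : fieldType) (L : fieldExtType K).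

Definition basisB := vbasis (fullv : {vspace L}).

Definition MB n (c : 'rV[L]_n) : 'M[K]_(\dim (fullv : {vspace L}), n) :=
  \matrix_(l, j) coord basisB l (c 0 j).

(* Rsupp(c) is the K-row space of MB c; wt_R(D) = dim_K of the K-span of all
   Rsupp(d), d in D (the row space of D), i.e. the least dimension of a
   K-subspace of K^n containing every Rsupp(d), d in D. *)
Definition wtR p n (D : 'M[L]_(p, n)) : nat :=
  pmin (fun w => exists V : 'M[K]_n,
          \rank V = w /\ forall d : 'rV[L]_n, (d <= D)%MS -> (MB d <= V)%MS).

Definition Mr p n (C : 'M[L]_(p, n)) (r : nat) : nat :=
  pmin (fun w => exists D : 'M[L]_n,
          [/\ \rank D = r, (D <= C)%MS & wtR D = w]).

Definition liftL p n (A : 'M[K]_(p, n)) : 'M[L]_(p, n) := map_mx (in_alg L) A.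

Definition kerK n (A : 'M[K]_n) : 'M[K]_n := kermx A^T.
Definition kerL n (A : 'M[K]_n) : 'M[L]_n := kermx (liftL A)^T.

Definition is_Mcode n (M : 'M[K]_n) p (C : 'M[L]_(p, n)) : Prop :=
  forall c : 'rV[L]_n, (c <= C)%MS -> (c *m (liftL M)^T <= C)%MS.

Definition minsplit s (Lam : {set 'I_s}) (k : 'I_s -> nat) (r : nat)
    (F : 'I_s -> nat -> nat) : nat :=
  pmin (fun w => exists rr : 'I_s -> nat,
          [/\ forall i, i \in Lam -> (rr i <= k i)%N,
              (\sum_(i in Lam) rr i)%N = r &
              w = (\sum_(i in Lam) F i (rr i))%N]).

Definition minidx s (Lam : {set 'I_s}) (F : 'I_s -> nat) : nat :=
  pmin (fun w => exists2 i, i \in Lam & w = F i).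

End RankMetric.

From HB Require Import structures.
From mathcomp Require Import all_boot all_order all_algebra all_field.
From mathcomp Require Import boolp zify.
Set Implicit Arguments. Unset Strict Implicit. Unset Printing Implicit Defensive.
Import GRing.Theory.
Local Open Scope ring_scope.

(* The idempotents e_i(M^T) given by the coprime factorisation of the minimal
   polynomial of M have entries in K, so they commute with taking rank
   supports: Rsupp(D e) = Rsupp(D) e.  They project the M-code C onto its
   primary components C_i = C :&: ker f_i^(m_i)(M), and C is the direct sum of
   the C_i.  Cutting an r-dimensional subcode D of C along the filtration
   D (e_i + ... + e_s) gives subcodes of the C_i whose dimensions add up to r
   and whose rank weights add up to at most wt_R(D); conversely, a direct sum
   of subcodes of the C_i has rank weight at most the sum of theirs.  Hence
   M_r(C) is the least sum of M_(r_i)(C_i) over splittings r = sum r_i.  The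
   bounds are Singleton bounds for the C_i read in the coordinates P_i, whose
   length d_i is at most n_i deg f_i because the characteristic polynomial of
   M restricted to ker f_i^(m_i)(M) is a power of f_i dividing chi_M. *)

Lemma pminP (P : nat -> Prop) : (exists n, P n) ->
  P (pmin P) /\ forall m, P m -> (pmin P <= m)%N.
Proof.
move=> ex; rewrite /pmin; case: pselect => [H|//].
case: ex_minnP => m /asboolP Pm mmin; split=> // k Pk; apply: mmin.
exact/asboolP.
Qed.

Lemma pmin_le (P : nat -> Prop) m : P m -> (pmin P <= m)%N.
Proof. by move=> Pm; apply: (pminP (ex_intro _ m Pm)).2. Qed.

Lemma pmin_ext (P Q : nat -> Prop) : (forall w, P w <-> Q w) -> pmin P = pmin Q.
Proof. by move=> PQ; have -> : P = Q by apply: funext => w; apply: propext. Qed.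

Section RankSupport.
Variables (K : fieldType) (L : fieldExtType K).
Local Notation dL := (\dim (fullv : {vspace L})).

Lemma MB_add n (c1 c2 : 'rV[L]_n) : MB (c1 + c2) = MB c1 + MB c2.
Proof. by apply/matrixP => l j; rewrite !mxE linearD. Qed.

Lemma MB0 n : MB (0 : 'rV[L]_n) = 0.
Proof. by apply/matrixP => l j; rewrite !mxE linear0. Qed.

Lemma MB_sum n (I : finType) (F : I -> 'rV[L]_n) :
  MB (\sum_i F i) = \sum_i MB (F i).
Proof. exact: (big_morph _ (@MB_add n) (@MB0 n)). Qed.

Definition lmul_mx (a : L) : 'M[K]_dL :=
  \matrix_(l, m) coord (basisB L) l (a * (basisB L)`_m).

Lemma MB_scale n (a : L) (c : 'rV[L]_n) : MB (a *: c) = lmul_mx a *m MB c.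
Proof.
apply/matrixP => l j; rewrite !mxE.
rewrite {1}(coord_vbasis (memvf (c 0 j))) mulr_sumr linear_sum.
by apply: eq_bigr => m _; rewrite !mxE -scalerAr linearZ /= mulrC.
Qed.

Lemma MB_mul a b (c : 'rV[L]_a) (X : 'M[K]_(a, b)) :
  MB (c *m liftL L X) = MB c *m X.
Proof.
apply/matrixP => l j; rewrite !mxE linear_sum; apply: eq_bigr => t _.
by rewrite !mxE /= mulr_algr linearZ /= mulrC.
Qed.

Definition Rsupp p n (D : 'M[L]_(p, n)) : 'M[K]_n :=
  (\sum_(i < p) <<MB (row i D)>>)%MS.

Lemma Rsupp_row p n (D : 'M[L]_(p, n)) i : (MB (row i D) <= Rsupp D)%MS.
Proof. by rewrite -(genmxE (MB (row i D))); apply: (sumsmx_sup i). Qed.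

Lemma Rsupp_min p n (D : 'M[L]_(p, n)) m (V : 'M[K]_(m, n)) :
  (forall i, MB (row i D) <= V)%MS -> (Rsupp D <= V)%MS.
Proof. by move=> H; apply/sumsmx_subP => i _; rewrite genmxE. Qed.

Lemma MB_sub_Rsupp p n (D : 'M[L]_(p, n)) (d : 'rV[L]_n) :
  (d <= D)%MS -> (MB d <= Rsupp D)%MS.
Proof.
move/submxP => [x ->]; rewrite mulmx_sum_row MB_sum.
apply: summx_sub => i _; rewrite MB_scale; apply: submx_trans (Rsupp_row _ _).
exact: submxMl.
Qed.

Lemma wtR_Rsupp p n (D : 'M[L]_(p, n)) : wtR D = \rank (Rsupp D).
Proof.
have ex : exists w, exists V : 'M[K]_n, \rank V = w /\
    forall d : 'rV[L]_n, (d <= D)%MS -> (MB d <= V)%MS.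
  by exists n, 1%:M; split=> [|d _]; [exact: mxrank1 | exact: submx1].
rewrite /wtR; have [[V [<- HV]] Vmin] := pminP ex.
apply/eqP; rewrite eqn_leq; apply/andP; split.
  by apply: Vmin; exists (Rsupp D); split=> // d; exact: MB_sub_Rsupp.
by apply/mxrankS/Rsupp_min => i; apply: HV; exact: row_sub.
Qed.

Lemma Rsupp_mono p1 p2 n (D1 : 'M[L]_(p1, n)) (D2 : 'M[L]_(p2, n)) :
  (D1 <= D2)%MS -> (Rsupp D1 <= Rsupp D2)%MS.
Proof.
move=> D12; apply: Rsupp_min => i; apply: MB_sub_Rsupp.
exact: submx_trans (row_sub _ _) D12.
Qed.

Lemma wtR_eqmx p1 p2 n (D1 : 'M[L]_(p1, n)) (D2 : 'M[L]_(p2, n)) :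
  (D1 :=: D2)%MS -> wtR D1 = wtR D2.
Proof.
by move=> e; rewrite !wtR_Rsupp; apply/eqmx_rank; rewrite !Rsupp_mono ?e.
Qed.

Lemma Rsupp_mul p a b (D : 'M[L]_(p, a)) (X : 'M[K]_(a, b)) :
  (Rsupp (D *m liftL L X) :=: Rsupp D *m X)%MS.
Proof.
apply/eqmxP/andP; split.
  by apply: Rsupp_min => i; rewrite row_mul MB_mul submxMr ?Rsupp_row.
rewrite /Rsupp sumsmxMr_gen; apply/sumsmx_subP => i _.
by rewrite genmxE (eqmxMr _ (genmxE _)) -MB_mul -row_mul Rsupp_row.
Qed.

Lemma wtR_mul_free p a b (D : 'M[L]_(p, a)) (X : 'M[K]_(a, b)) :
  row_free X -> wtR (D *m liftL L X) = wtR D.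
Proof. by move=> fX; rewrite !wtR_Rsupp (Rsupp_mul _ _) mxrankMfree. Qed.

Lemma Rsupp_sub_liftL p n m (D : 'M[L]_(p, n)) (S : 'M[K]_(m, n)) :
  (D <= liftL L S)%MS -> (Rsupp D <= S)%MS.
Proof.
move=> DS; apply: Rsupp_min => i.
by have /submxP [y ->] := submx_trans (row_sub i D) DS; rewrite MB_mul submxMl.
Qed.

Lemma wtR0 n : wtR (0 : 'M[L]_n) = 0%N.
Proof.
rewrite wtR_Rsupp; apply/eqP; rewrite mxrank_eq0 -submx0.
by apply: Rsupp_min => i; rewrite row0 MB0 sub0mx.
Qed.

Lemma wtR_adds p1 p2 n (A : 'M[L]_(p1, n)) (B : 'M[L]_(p2, n)) :
  (wtR (A + B)%MS <= wtR A + wtR B)%N.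
Proof.
rewrite !wtR_Rsupp; apply: leq_trans (mxrank_adds_leqif (Rsupp A) (Rsupp B)).
apply/mxrankS/Rsupp_min => i; have [u ->] := sub_addsmxP (row_sub i (A + B)%MS).
by rewrite MB_add addmx_sub_adds // MB_sub_Rsupp ?submxMl.
Qed.

Lemma wtR_sums (I : finType) (P : pred I) n (F : I -> 'M[L]_n) :
  (wtR (\sum_(i | P i) F i)%MS <= \sum_(i | P i) wtR (F i))%N.
Proof.
elim/big_rec2: _ => [|i y1 y2 _ IH]; first by rewrite wtR0.
exact: leq_trans (wtR_adds _ _) (leq_add _ IH).
Qed.

End RankSupport.

Section GeneralizedWeights.
Variables (K : fieldType) (L : fieldExtType K).

Lemma exists_submx_rank n (Y : 'M[L]_n) r : (r <= \rank Y)%N ->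
  exists D : 'M[L]_n, \rank D = r /\ (D <= Y)%MS.
Proof.
move=> rY; exists (<<(pid_mx r : 'M[L]_(r, \rank Y)) *m row_base Y>>)%MS.
rewrite !genmxE mxrankMfree ?row_base_free ?rank_pid_mx //.
by split=> //; rewrite (submx_trans (submxMl _ _)) ?eq_row_base.
Qed.

Lemma MrP p n (C : 'M[L]_(p, n)) r : (r <= \rank C)%N ->
  exists D : 'M[L]_n, [/\ \rank D = r, (D <= C)%MS & wtR D = Mr C r].
Proof.
rewrite -(genmxE C) => /exists_submx_rank [D [rD DC]].
have ex : exists w, exists D : 'M[L]_n, [/\ \rank D = r, (D <= C)%MS & wtR D = w].
  by exists (wtR D), D; rewrite -(genmxE C).
exact: (pminP ex).1.
Qed.

Lemma Mr_le_wtR p n (C : 'M[L]_(p, n)) (D : 'M[L]_n) :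
  (D <= C)%MS -> (Mr C (\rank D) <= wtR D)%N.
Proof. by move=> DC; apply: pmin_le; exists D. Qed.

Lemma Mr0 p n (C : 'M[L]_(p, n)) : Mr C 0 = 0%N.
Proof.
apply/eqP; rewrite -leqn0.
by have := @Mr_le_wtR p n C 0 (sub0mx _ _); rewrite mxrank0 wtR0.
Qed.

Lemma Mr_eqmx p1 p2 n (C1 : 'M[L]_(p1, n)) (C2 : 'M[L]_(p2, n)) r :
  (C1 :=: C2)%MS -> Mr C1 r = Mr C2 r.
Proof.
move=> e; apply: pmin_ext => w.
by split=> -[D [rD DC wD]]; exists D; split; rewrite // ?e // -e.
Qed.

Lemma Mr_mul_free p a b (C : 'M[L]_(p, a)) (Q : 'M[K]_(a, b)) r :
  row_free Q -> Mr (C *m liftL L Q) r = Mr C r.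
Proof.
move=> fQ; have fQL : row_free (liftL L Q) by rewrite /row_free mxrank_map.
apply: pmin_ext => w; split=> -[D [rD DC wD]].
  have [W DE] := submxP DC.
  exists <<W *m C>>%MS; rewrite !genmxE (wtR_eqmx (genmxE _)) submxMl.
  by rewrite -(wtR_mul_free _ fQ) -(mxrankMfree _ fQL) -mulmxA -DE.
exists <<D *m liftL L Q>>%MS; rewrite !genmxE (wtR_eqmx (genmxE _)).
by rewrite wtR_mul_free ?mxrankMfree ?submxMr.
Qed.

(* A Singleton-type bound: the [n - rank X + r] first coordinate axes of K^n
   meet X in dimension at least r. *)
Lemma Mr_Singleton n (X : 'M[L]_n) r : (r <= \rank X)%N ->
  (Mr X r <= n - \rank X + r)%N.
Proof.
move=> rX; have Xn : (\rank X <= n)%N by exact: rank_leq_col.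
pose S : 'M[K]_n := pid_mx (n - \rank X + r).
have rS : \rank (liftL L S) = (n - \rank X + r)%N.
  by rewrite mxrank_map rank_pid_mx //; lia.
have rXS : (r <= \rank (X :&: liftL L S))%N.
  have := mxrank_sum_cap X (liftL L S); have := rank_leq_col (X + liftL L S)%MS.
  by rewrite rS; lia.
have [D [rD DXS]] := exists_submx_rank rXS.
rewrite -{1}rD; apply: leq_trans (Mr_le_wtR (submx_trans DXS (capmxSl _ _))) _.
rewrite wtR_Rsupp -rS mxrank_map; apply/mxrankS/Rsupp_sub_liftL.
exact: submx_trans DXS (capmxSr _ _).
Qed.

End GeneralizedWeights.

Section Idempotents.
Variables (K : fieldType) (L : fieldExtType K).

Lemma liftLM a b c (A : 'M[K]_(a, b)) (B : 'M[K]_(b, c)) :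
  liftL L (A *m B) = liftL L A *m liftL L B.
Proof. exact: map_mxM. Qed.

Lemma liftLD a b (A B : 'M[K]_(a, b)) : liftL L (A + B) = liftL L A + liftL L B.
Proof. exact: map_mxD. Qed.

Lemma rank_wtR_split_head n (e0 g : 'M[K]_n) (D : 'M[L]_n) :
  e0 *m e0 = e0 -> e0 *m g = 0 -> D *m liftL L (e0 + g) = D ->
  exists2 E0 : 'M[L]_n, (E0 <= D *m liftL L e0)%MS &
    (\rank E0 + \rank (D *m liftL L g) = \rank D /\
     wtR E0 + wtR (D *m liftL L g) <= wtR D)%N.
Proof.
move=> e0e0 e0g De.
set E0 := (D :&: liftL L e0)%MS.
have /submxP[U E0U] : (E0 <= liftL L e0)%MS := capmxSr _ _.
have E0e0 : E0 *m liftL L e0 = E0 by rewrite E0U -mulmxA -liftLM e0e0.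
have E0g : E0 *m liftL L g = 0 by rewrite E0U -mulmxA -liftLM e0g /liftL map_mx0 mulmx0.
have kerE0 : (D :&: kermx (liftL L g) :=: E0)%MS.
  apply/eqmxP/andP; split; last by rewrite sub_capmx capmxSl; apply/sub_kermxP.
  set Z := (D :&: _)%MS; have /submxP[W ZW] : (Z <= D)%MS := capmxSl _ _.
  have Zg : Z *m liftL L g = 0 by apply/sub_kermxP; exact: capmxSr.
  have Ze0 : Z *m liftL L e0 = Z.
    have Ze : Z *m liftL L (e0 + g) = Z by rewrite ZW -mulmxA De.
    by rewrite liftLD mulmxDr Zg addr0 in Ze.
  by rewrite sub_capmx capmxSl -Ze0 submxMl.
exists E0; first by rewrite -E0e0 submxMr ?capmxSl.
rewrite addnC -kerE0 mxrank_mul_ker; split=> //.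
rewrite !wtR_Rsupp (Rsupp_mul _ _) -(mxrank_mul_ker (Rsupp D) g).
rewrite addnC leq_add2l; apply/mxrankS; rewrite sub_capmx Rsupp_mono ?capmxSl //.
apply: submx_trans (Rsupp_sub_liftL (capmxSr D (liftL L e0))) _.
by apply/sub_kermxP.
Qed.

(* E i is the part of D (e_i + ... + e_(s-1)) lying in the image of e_i. *)
Lemma rank_wtR_split N s (e : 'I_s -> 'M[K]_N) :
  (forall i j, i != j -> e i *m e j = 0) -> (forall i, e i *m e i = e i) ->
  forall D : 'M[L]_N, D *m liftL L (\sum_i e i) = D ->
  exists E : 'I_s -> 'M[L]_N, [/\ forall i, (E i <= D *m liftL L (e i))%MS,
     (\sum_i \rank (E i))%N = \rank D & (\sum_i wtR (E i) <= wtR D)%N].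
Proof.
elim: s e => [|s IH] e orth idem D De.
  exists (fun _ => 0); rewrite !big_ord0; split=> [[]//||//].
  by rewrite -De big_ord0 /liftL map_mx0 mulmx0 mxrank0.
pose g := \sum_j e (lift ord0 j).
have e0g : e ord0 *m g = 0.
  by rewrite mulmx_sumr big1 // => j _; rewrite orth // neq_lift.
have ge j : g *m e (lift ord0 j) = e (lift ord0 j).
  rewrite mulmx_suml (bigD1 j) //= big1 ?addr0 // => l lj.
  by rewrite orth // (inj_eq lift_inj).
have gg : g *m g = g by rewrite {2}/g mulmx_sumr; apply: eq_bigr => j _; exact: ge.
have De' : D *m liftL L (e ord0 + g) = D by rewrite -big_ord_recl.
have [E0 E0sub [E0rk E0wt]] := rank_wtR_split_head (idem ord0) e0g De'.
have Dg : D *m liftL L g *m liftL L g = D *m liftL L g by rewrite -mulmxA -liftLM gg.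
have orth' i j : i != j -> e (lift ord0 i) *m e (lift ord0 j) = 0.
  by move=> ij; rewrite orth // (inj_eq lift_inj).
have [E' [E'sub E'rk E'wt]] := IH _ orth' (fun i => idem _) _ Dg.
exists (fun i => if unlift ord0 i is Some j then E' j else E0).
rewrite !big_ord_recl unlift_none.
under eq_bigr do rewrite liftK.
under [X in (_ + X <= _)%N]eq_bigr do rewrite liftK.
split.
- move=> i; case: (unliftP ord0 i) => [j ->|->]; rewrite ?liftK ?unlift_none //.
  by rewrite (submx_trans (E'sub j)) // -mulmxA -liftLM ge.
- by rewrite E'rk.
- exact: leq_trans (leq_add (leqnn _) E'wt) E0wt.
Qed.

End Idempotents.

Section MinSplit.
Variables (s : nat) (Lam : {set 'I_s}) (k : 'I_s -> nat).

Definition is_split r (rr : 'I_s -> nat) :=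
  (forall i, i \in Lam -> rr i <= k i)%N /\ (\sum_(i in Lam) rr i)%N = r.

Lemma exists_split r :
  (r <= \sum_(i in Lam) k i)%N -> exists rr, is_split r rr.
Proof.
elim: r => [|r IH] rk; first by exists (fun _ => 0%N); split=> //; rewrite big1.
have [rr [rrk rrr]] := IH (ltnW rk).
have [i iL rri] : exists2 i, i \in Lam & (rr i < k i)%N.
  apply/exists_inP; apply: contraTT rk; rewrite negb_exists_in => /forall_inP rrk'.
  by rewrite -ltnNge ltnS -rrr leq_sum // => j /rrk'; rewrite -leqNgt.
exists (fun j => rr j + (j == i))%N; split.
  by move=> j jL; case: eqP => [->|_]; rewrite ?addn1 ?addn0 ?rrk.
rewrite big_split /= rrr (bigD1 i) //= eqxx big1 ?addn0 ?addn1 //.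
by move=> j /andP[_ /negPf->].
Qed.

Lemma minsplit_le r F rr : is_split r rr ->
  (minsplit Lam k r F <= \sum_(i in Lam) F i (rr i))%N.
Proof. by case=> rrk rrr; apply: pmin_le; exists rr. Qed.

Lemma minsplitP r F : (exists rr, is_split r rr) ->
  exists2 rr, is_split r rr & minsplit Lam k r F = (\sum_(i in Lam) F i (rr i))%N.
Proof.
case=> rr [rrk rrr].
have ex : exists w, exists rr, [/\ forall i, i \in Lam -> (rr i <= k i)%N,
    (\sum_(i in Lam) rr i)%N = r & w = (\sum_(i in Lam) F i (rr i))%N].
  by exists (\sum_(i in Lam) F i (rr i))%N, rr.
by rewrite /minsplit; have [rs [rsk rsr ->]] := (pminP ex).1; exists rs.
Qed.

Lemma minsplit_le_add r F G : (exists rr, is_split r rr) ->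
  (forall i ri, i \in Lam -> ri <= k i -> F i ri <= G i ri + ri)%N ->
  (minsplit Lam k r F <= minsplit Lam k r G + r)%N.
Proof.
move=> ex FG; have [rs [rsk rsr] ->] := minsplitP G ex.
apply: leq_trans (minsplit_le F (conj rsk rsr)) _.
by rewrite -rsr -big_split leq_sum // => i iL; apply: FG (rsk i iL).
Qed.

(* a split of the full sum is forced to be [k] itself *)
Lemma minsplit_full F :
  minsplit Lam k (\sum_(i in Lam) k i) F = (\sum_(i in Lam) F i (k i))%N.
Proof.
have [rs [rsk rsr] ->] := minsplitP F (ex_intro _ k (conj (fun _ _ => leqnn _) erefl)).
have /forall_inP rsE : [forall i in Lam, rs i == k i].
  by rewrite -(leqif_sum (fun i iL => leqif_eq (rsk i iL))).2 rsr.
by apply: eq_bigr => i iL; rewrite (eqP (rsE _ iL)).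
Qed.

Lemma minidx_le F i : i \in Lam -> (minidx Lam F <= F i)%N.
Proof. by move=> iL; apply: pmin_le; exists i. Qed.

Lemma minidxP F : Lam != set0 -> exists2 i, i \in Lam & minidx Lam F = F i.
Proof.
case/set0Pn=> i iL; have ex : exists w, exists2 j, j \in Lam & w = F j by exists (F i), i.
exact: (pminP ex).1.
Qed.

Lemma minidx_le_add F G c : Lam != set0 ->
  (forall i, i \in Lam -> F i <= G i + c)%N ->
  (minidx Lam F <= minidx Lam G + c)%N.
Proof.
move=> /(minidxP G)[i iL ->] FG; exact: leq_trans (minidx_le F iL) (FG i iL).
Qed.

Lemma minsplit1 F : Lam != set0 -> (forall i, i \in Lam -> 0 < k i)%N ->
  (forall i, F i 0%N = 0%N) -> minsplit Lam k 1 F = minidx Lam (fun i => F i 1%N).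
Proof.
move=> Lam0 k_gt0 F0.
have single i rr : i \in Lam -> rr i = 1%N ->
    (forall j, j != i -> j \in Lam -> rr j = 0%N) ->
    (\sum_(j in Lam) F j (rr j))%N = F i 1%N.
  move=> iL rri rrj; rewrite (bigD1 i) //= rri big1 ?addn0 // => j /andP[jL ji].
  by rewrite rrj.
have [i iL iE] := minidxP (fun i => F i 1%N) Lam0.
have ui : is_split 1 (fun j => (j == i) : nat).
  split=> [j jL|]; first by case: eqP => // _; exact: k_gt0.
  by apply/eqP/sum_nat_eq1; exists i; rewrite iL eqxx; split=> // j /negPf->.
apply/eqP; rewrite eqn_leq; apply/andP; split.
  rewrite iE -(single i (fun j => (j == i) : nat)) ?eqxx ?minsplit_le //.
  by move=> j /negPf->.
have [rs [_ /eqP/sum_nat_eq1[j [jL rsj rs0]]] ->] := minsplitP F (ex_intro _ _ ui).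
rewrite (single j) ?minidx_le // => l lj lL; exact: rs0.
Qed.

End MinSplit.

Lemma rank_sumsmx_sub_direct (F : fieldType) (I : finType) (P : pred I) n
    (X Y : I -> 'M[F]_n) :
  mxdirect (\sum_(i | P i) X i) -> (forall i, P i -> (Y i <= X i)%MS) ->
  \rank (\sum_(i | P i) Y i)%MS = (\sum_(i | P i) \rank (Y i))%N.
Proof.
move=> /mxdirect_sumsP dX YX; apply/eqP; rewrite -mxdirectE /=.
apply/mxdirect_sumsP => i Pi; apply/eqP; rewrite -submx0 -[X in (_ <= X)%MS](dX i Pi).
by rewrite capmxS ?YX // sumsmxS // => j /andP[Pj _]; apply: YX.
Qed.

Section Decomposition.
Variables (K : fieldType) (L : fieldExtType K) (n s : nat).
Variables (e : 'I_s -> 'M[K]_n) (C : 'M[L]_n) (X : 'I_s -> 'M[L]_n).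
Hypothesis e_orth : forall i j, i != j -> e i *m e j = 0.
Hypothesis e_idem : forall i, e i *m e i = e i.
Hypothesis e_sum : \sum_i e i = 1%:M.
Hypothesis X_subC : forall i, (X i <= C)%MS.
Hypothesis CeX : forall i, (C *m liftL L (e i) <= X i)%MS.
Hypothesis X_direct : mxdirect (\sum_i X i).

Lemma mulmx_liftL_sum_e m (D : 'M[L]_(m, n)) : D *m liftL L (\sum_i e i) = D.
Proof. by rewrite e_sum /liftL map_mx1 mulmx1. Qed.

Lemma rank_decomp : \rank C = (\sum_i \rank (X i))%N.
Proof.
rewrite -(rank_sumsmx_sub_direct X_direct (fun i _ => submx_refl (X i))).
apply/eqmx_rank/andP; split.
  rewrite -{1}(mulmx_liftL_sum_e C) /liftL map_mx_sum mulmx_sumr.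
  by apply: summx_sub => i _; rewrite (submx_trans (CeX i)) ?(sumsmx_sup i).
by apply/sumsmx_subP => i _; apply: X_subC.
Qed.

Lemma Mr_decomp_le rr : (forall i, rr i <= \rank (X i))%N ->
  (Mr C (\sum_i rr i) <= \sum_i Mr (X i) (rr i))%N.
Proof.
move=> rrX.
have [Ds HDs] : exists Ds : 'I_s -> 'M[L]_n, forall i,
    [/\ \rank (Ds i) = rr i, (Ds i <= X i)%MS & wtR (Ds i) = Mr (X i) (rr i)].
  apply: (@fin_all_exists _ (fun _ => 'M[L]_n) (fun i D => [/\ \rank D = rr i,
    (D <= X i)%MS & wtR D = Mr (X i) (rr i)])) => i; exact: MrP.
have DsX i : (Ds i <= X i)%MS by case: (HDs i).
have <- : \rank (\sum_i Ds i)%MS = (\sum_i rr i)%N.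
  by rewrite (rank_sumsmx_sub_direct X_direct) //; apply: eq_bigr => i _; case: (HDs i).
apply: leq_trans (Mr_le_wtR _) (leq_trans (wtR_sums _ _) _).
  by apply/sumsmx_subP => i _; exact: submx_trans (DsX i) (X_subC i).
by rewrite leq_eqVlt; apply/orP; left; apply/eqP/eq_bigr => i _; case: (HDs i).
Qed.

Lemma Mr_decomp_ge r : (r <= \rank C)%N ->
  exists rr, [/\ forall i, (rr i <= \rank (X i))%N, (\sum_i rr i)%N = r &
                 (\sum_i Mr (X i) (rr i) <= Mr C r)%N].
Proof.
case/MrP=> D [<- DC <-].
have [E [ED <- EwD]] := rank_wtR_split e_orth e_idem (mulmx_liftL_sum_e D).
have EX i : (E i <= X i)%MS.
  by rewrite (submx_trans (ED i)) // (submx_trans _ (CeX i)) ?submxMr.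
exists (fun i => \rank (E i)); split=> //; first by move=> i; apply: mxrankS.
by apply: leq_trans EwD; apply: leq_sum => i _; apply: Mr_le_wtR.
Qed.

Lemma Mr_decomp (Lam : {set 'I_s}) r :
  (forall i, i \notin Lam -> \rank (X i) = 0%N) -> (r <= \rank C)%N ->
  Mr C r = minsplit Lam (fun i => \rank (X i)) r (fun i ri => Mr (X i) ri).
Proof.
move=> X0 rC; have [rr [rrX rrr Cwt]] := Mr_decomp_ge rC.
have rr0 i : i \notin Lam -> rr i = 0%N by move/X0 => Xi0; apply/eqP; rewrite -leqn0 -Xi0.
have rrL : is_split Lam (fun i => \rank (X i)) r rr.
  by split=> [i _|]; rewrite ?rrX // -rrr big_rmcond // => i /rr0.
apply/eqP; rewrite eqn_leq; apply/andP; split.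
  have [rs [rsX rsr] ->] := minsplitP (fun i ri => Mr (X i) ri) (ex_intro _ rr rrL).
  pose rs' i := if i \in Lam then rs i else 0%N.
  have rs'X i : (rs' i <= \rank (X i))%N by rewrite /rs'; case: ifP => // /rsX.
  have rs'E (G : 'I_s -> nat -> nat) : (forall i, G i 0%N = 0%N) ->
      (\sum_i G i (rs' i) = \sum_(i in Lam) G i (rs i))%N.
    by move=> G0; rewrite [RHS]big_mkcond; apply: eq_bigr => i _; rewrite /rs'; case: ifP.
  have := Mr_decomp_le rs'X; rewrite (rs'E (fun _ ri => ri)) // rsr.
  by rewrite (rs'E (fun i ri => Mr (X i) ri)) // => i; apply: Mr0.
apply: leq_trans (minsplit_le _ rrL) (leq_trans _ Cwt).
by rewrite big_rmcond // => i /rr0 ->; rewrite Mr0.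
Qed.

End Decomposition.

Section CharPoly.
Variable F : fieldType.

Lemma horner_mx_trmx n (M : 'M[F]_n.+1) p : horner_mx M^T p = (horner_mx M p)^T.
Proof.
elim/poly_ind: p => [|p c IH]; first by rewrite !rmorph0 trmx0.
rewrite !(rmorphD, rmorphM) /= !(horner_mx_X, horner_mx_C) IH.
rewrite linearD /= tr_scalar_mx trmx_mul; congr (_ + _).
by rewrite -!mulmxE -!trmx_mul (comm_mx_horner p (comm_mx_refl M)).
Qed.

Lemma char_poly_dvd_exp w (B : 'M[F]_w.+1) p :
  horner_mx B p = 0 -> char_poly B %| p ^+ w.+1.
Proof.
move=> Bp.
(* p(X) - p(B) is divisible by X - B in the matrix ring over F[X] *)
have [Q HQ] : exists Q, p%:M - map_mx polyC (horner_mx B p) = char_poly_mx B *m Q.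
  elim/poly_ind: {Bp} p => [|q c [Q HQ]].
    exists 0; rewrite mulmx0 rmorph0; apply/matrixP => i j.
    by rewrite !mxE rmorph0 mxE polyC0 subr0.
  exists (Q *m 'X%:M + map_mx polyC (horner_mx B q)).
  rewrite !(rmorphD, rmorphM) /= !(horner_mx_X, horner_mx_C).
  rewrite map_scalar_mx /= mulmxDr mulmxA -HQ /char_poly_mx.
  have cm : map_mx polyC B *m map_mx polyC (horner_mx B q) =
            map_mx polyC (horner_mx B q) *m map_mx polyC B.
    by rewrite -!map_mxM (comm_mx_horner q (comm_mx_refl B)).
  have xh : 'X%:M *m map_mx polyC (horner_mx B q) =
            map_mx polyC (horner_mx B q) *m 'X%:M by rewrite scalar_mxC.
  rewrite mulmxBl [('X%:M - _) *m _]mulmxBl xh cm !mulmxE.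
  by rewrite opprD addrACA subrr addr0 addrA subrK.
move: (congr1 determinant HQ); rewrite Bp map_mx0 subr0 det_scalar det_mulmx.
by move=> ->; apply: dvdp_mulr.
Qed.

Lemma char_poly_lblock_dvd a b n (e : (a + b)%N = n) (A : 'M[F]_n)
    (V1 : 'M_(a, n)) (V2 : 'M_(b, n)) (B1 : 'M_a) :
  \rank (col_mx V1 V2) = n -> V1 *m A = B1 *m V1 -> char_poly B1 %| char_poly A.
Proof.
case: n / e A V1 V2 => A V1 V2 rk HV.
have Qu : col_mx V1 V2 \in unitmx by rewrite -row_free_unit; apply/eqP.
set Q := col_mx V1 V2; set Bf := Q *m A *m invmx Q.
have V1Q : V1 *m invmx Q = row_mx 1%:M 0.
  have := mulmxV Qu; rewrite /Q mul_col_mx (scalar_mx_block a b 1) /block_mx.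
  by case/eq_col_mx.
have Bfe : Bf = block_mx B1 0 (dlsubmx Bf) (drsubmx Bf).
  have uBf : usubmx Bf = row_mx B1 0.
    by rewrite /Bf /Q !mul_col_mx col_mxKu HV -mulmxA V1Q mul_mx_row mulmx1 mulmx0.
  by rewrite -{1}(submxK Bf) /ulsubmx /ursubmx uBf row_mxKl row_mxKr.
have charBf : char_poly Bf = char_poly B1 * char_poly (drsubmx Bf).
  rewrite {1}Bfe /char_poly /char_poly_mx map_block_mx (scalar_mx_block a b).
  by rewrite map_mx0 opp_block_mx add_block_mx oppr0 addr0 det_lblock.
have <- : char_poly Bf = char_poly A.
  pose Q' := map_mx (@polyC F) Q.
  have HQ : char_poly_mx Bf *m Q' = Q' *m char_poly_mx A.
    by rewrite /char_poly_mx mulmxBl mulmxBr scalar_mxC -map_mxM mulmxKV // map_mxM.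
  have := congr1 determinant HQ; rewrite !det_mulmx -/(char_poly Bf) -/(char_poly A).
  by rewrite [_ * char_poly A]mulrC; apply: mulIf; rewrite det_map_mx polyC_eq0 -unitfE -unitmxE.
by rewrite charBf dvdp_mulr.
Qed.

Lemma char_poly_conjmx_dvd n (A : 'M[F]_n) (W : 'M_n) :
  stablemx W A -> char_poly (conjmx (row_base W) A) %| char_poly A.
Proof.
move=> SW; have e : (\rank W + \rank (W^C)%MS)%N = n.
  by rewrite mxrank_compl subnKC // rank_leq_col.
have HV : row_base W *m A = conjmx (row_base W) A *m row_base W.
  by rewrite /conjmx mulmxKpV // stablemx_row_base.
have rk : \rank (col_mx (row_base W) (row_base (W^C)%MS)) = n.
  rewrite -addsmxE (adds_eqmx (eq_row_base _) (eq_row_base _)).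
  by apply/eqP; exact: addsmx_compl_full.
exact: (char_poly_lblock_dvd e rk HV).
Qed.

Lemma char_poly_conjmx_dvd_exp w n (A : 'M[F]_n.+1) (V : 'M_(w, n.+1)) p :
  row_free V -> stablemx V A -> V *m horner_mx A p = 0 ->
  char_poly (conjmx V A) %| p ^+ w.
Proof.
case: w V => [|w] V fV SV Vp; first by rewrite /char_poly det_mx00 dvd1p.
by apply: char_poly_dvd_exp; rewrite horner_mx_conj // /conjmx Vp mul0mx.
Qed.

Lemma coprimep_irred_monic (f g : {poly F}) :
  irreducible_poly f -> irreducible_poly g -> f \is monic -> g \is monic ->
  f != g -> coprimep f g.
Proof.
move=> If Ig mf mg fg; rewrite coprimep_def.
have [d1|df] := irredp_XsubCP If (dvdp_gcdl f g); first by rewrite size_poly_eq1.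
have fdg : f %| g by rewrite -(eqp_dvdl _ df) dvdp_gcdr.
have [f1|fg'] := irredp_XsubCP Ig fdg.
  by move: If.1; rewrite -size_poly_eq1 in f1; rewrite (eqP f1).
by move: fg'; rewrite eqp_monic // (negbTE fg).
Qed.

Lemma coprimep_prodr r (I : finType) (P : pred I) (q : I -> {poly F}) :
  (forall i, P i -> coprimep r (q i)) -> coprimep r (\prod_(i | P i) q i).
Proof.
move=> H; elim/big_rec: _ => [|i x Pi cx]; first exact: coprimep1.
by rewrite coprimepMr H.
Qed.

Lemma coprimep_irred_exp s (f : 'I_s -> {poly F}) i j a b :
  (forall i, f i \is monic /\ irreducible_poly (f i)) -> injective f ->
  i != j -> coprimep (f i ^+ a) (f j ^+ b).
Proof.
move=> Hf finj ij; apply/coprimep_expl/coprimep_expr.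
have [mi Ii] := Hf i; have [mj Ij] := Hf j.
by apply: coprimep_irred_monic => //; apply: contra ij => /eqP /finj ->.
Qed.

(* The restriction of A to the A-stable space ker f_j^m(A) has a characteristic
   polynomial that is a power of f_j and divides char_poly A. *)
Lemma rank_kermx_horner_irred n (A : 'M[F]_n.+1) s (f : 'I_s -> {poly F})
    (nu : 'I_s -> nat) :
  (forall i, f i \is monic /\ irreducible_poly (f i)) -> injective f ->
  char_poly A = \prod_(i < s) f i ^+ nu i ->
  forall j m, (\rank (kermx (horner_mx A (f j ^+ m))) <= nu j * (size (f j)).-1)%N.
Proof.
move=> Hf finj Hch j m; set W := kermx _.
have SW : stablemx W A := comm_mx_stable_kermxpoly (f j ^+ m) (comm_mx_refl A).
have dvA := char_poly_conjmx_dvd SW; set cB := char_poly _ in dvA.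
have dvf : cB %| (f j ^+ m) ^+ \rank W.
  rewrite char_poly_conjmx_dvd_exp ?row_base_free ?stablemx_row_base //.
  by apply/sub_kermxP; rewrite (eq_row_base W).
have cop : coprimep cB (\prod_(i | i != j) f i ^+ nu i).
  apply: (coprimep_dvdr dvf); rewrite -exprM; apply: coprimep_prodr => i ij.
  by apply: coprimep_irred_exp; rewrite // eq_sym.
have chE : char_poly A = f j ^+ nu j * \prod_(i | i != j) f i ^+ nu i.
  by rewrite Hch (bigD1 j).
have dvfj : cB %| f j ^+ nu j by rewrite -(Gauss_dvdpl _ cop) -chE.
have fn0 : f j ^+ nu j != 0 by rewrite expf_neq0 // irredp_neq0 //; case: (Hf j).
have := dvdp_leq fn0 dvfj; rewrite /cB size_char_poly mulnC -size_exp.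
by case: (size _).
Qed.

(* Bezout relations u_j p_j + v_j prod_(l != j) p_l = 1 give idempotents
   e_j = v_j prod_(l != j) p_l projecting onto the kernels of the p_j(A). *)
Lemma horner_idempotents n (A : 'M[F]_n.+1) s (p : 'I_s -> {poly F}) :
  (forall i j, i != j -> coprimep (p i) (p j)) -> horner_mx A (\prod_i p i) = 0 ->
  exists e : 'I_s -> {poly F},
   [/\ forall j, horner_mx A (e j) *m horner_mx A (p j) = 0,
       \sum_j horner_mx A (e j) = 1%:M,
       forall i j, i != j -> horner_mx A (e i) *m horner_mx A (e j) = 0 &
       forall j, horner_mx A (e j) *m horner_mx A (e j) = horner_mx A (e j)].
Proof.
move=> cp A0.
have [uv Huv] : exists uv : 'I_s -> {poly F} * {poly F},
    forall j, (uv j).1 * p j + (uv j).2 * \prod_(l | l != j) p l = 1.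
  apply: (@fin_all_exists _ (fun _ => ({poly F} * {poly F})%type)
    (fun j uv => uv.1 * p j + uv.2 * \prod_(l | l != j) p l = 1)) => j.
  apply/Bezout_eq1_coprimepP/coprimep_prodr => l lj; apply: cp; rewrite eq_sym.
  exact: lj.
pose e j := (uv j).2 * \prod_(l | l != j) p l; pose E j := horner_mx A (e j).
have ep j : E j *m horner_mx A (p j) = 0.
  have epE : e j * p j = (uv j).2 * \prod_i p i.
    by rewrite /e -mulrA; congr (_ * _); rewrite [RHS](bigD1 j) //= mulrC.
  by rewrite /E mulmxE -rmorphM epE rmorphM /= A0 mulr0.
have ker_e j m (x : 'M_(m, n.+1)) : x *m horner_mx A (p j) = 0 -> x *m E j = x.
  have eE : e j = 1 - (uv j).1 * p j by rewrite -(Huv j) addrC addKr.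
  move=> xp; rewrite /E eE rmorphB rmorph1 /= mulrC rmorphM /= -mulmxE.
  by rewrite mulmxBr mulmx1 mulmxA xp mul0mx subr0.
have ker_e' j l m (x : 'M_(m, n.+1)) :
    l != j -> x *m horner_mx A (p l) = 0 -> x *m E j = 0.
  move=> lj xp; rewrite /E /e (bigD1 l) //= mulrCA rmorphM /= -mulmxE.
  by rewrite mulmxA xp mul0mx.
exists e; split.
- exact: ep.
- have cp' : {in predT &, forall i j : 'I_s, j != i -> coprimep (p i) (p j)}.
    by move=> i j _ _ ji; rewrite cp // eq_sym.
  have full : (1%:M <= \sum_l kermx (horner_mx A (p l)))%MS.
    by rewrite -(kermxpoly_prod A cp') /kermxpoly A0 kermx0.
  have [X HX] := sub_sumsmxP full.
  rewrite -[LHS]mul1mx HX mulmx_suml; apply: eq_bigr => l _.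
  rewrite -mulmxA mulmx_sumr (bigD1 l) //= big1 ?addr0 ?ker_e ?mulmx_ker // => j jl.
  by apply: ker_e' (mulmx_ker _); rewrite eq_sym.
- by move=> i j ij; apply: ker_e' (ep i).
- by move=> j; apply/ker_e/ep.
Qed.

End CharPoly.

Section MCode.
Variables (K : fieldType) (L : fieldExtType K).

Lemma Mcode_decomposition n (M : 'M[K]_n.+1) s (p : 'I_s -> {poly K})
    (C : 'M[L]_n.+1) :
  (forall i j, i != j -> coprimep (p i) (p j)) -> horner_mx M (\prod_i p i) = 0 ->
  is_Mcode M C ->
  exists e : 'I_s -> 'M[K]_n.+1,
    [/\ forall i j, i != j -> e i *m e j = 0, forall i, e i *m e i = e i,
        \sum_i e i = 1%:M,
        forall i, (C *m liftL L (e i) <= C :&: kerL L (horner_mx M (p i)))%MS &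
        mxdirect (\sum_i (C :&: kerL L (horner_mx M (p i))))%MS].
Proof.
move=> cp M0 HC; pose A := M^T.
have A0 : horner_mx A (\prod_i p i) = 0 by rewrite horner_mx_trmx M0 trmx0.
have [e [ep esum eorth eidem]] := horner_idempotents cp A0.
have kerE i : kerL L (horner_mx M (p i)) =
    kermxpoly (liftL L A) (map_poly (in_alg L) (p i)).
  by rewrite /kerL /kermxpoly /liftL -map_horner_mx horner_mx_trmx map_trmx.
have CA : stablemx C (liftL L A).
  by apply/row_subP => j; rewrite row_mul /liftL -map_trmx HC ?row_sub.
exists (fun i => horner_mx A (e i)); split=> //.
  move=> i; rewrite sub_capmx kerE /liftL map_horner_mx horner_mx_stable //=.
  by apply/sub_kermxP; rewrite -mulmxA -!map_horner_mx -map_mxM ep map_mx0 mulmx0.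
rewrite mxdirectE /= (rank_sumsmx_sub_direct (X := fun i => kermxpoly (liftL L A)
  (map_poly (in_alg L) (p i)))) => [//||j _]; last by rewrite -kerE capmxSr.
by apply: mxdirect_sum_kermx => i j _ _ ji; rewrite coprimep_map cp // eq_sym.
Qed.

Lemma coordinate_code a n (Q : 'M[K]_(a, n)) (Y : 'M[L]_n) (Z : 'M[L]_a) :
  row_free Q -> (Y <= liftL L Q)%MS ->
  (forall c : 'rV[L]_a, (c <= Z)%MS <-> (c *m liftL L Q <= Y)%MS) ->
  \rank Z = \rank Y /\ forall r, Mr Z r = Mr Y r.
Proof.
move=> fQ YQ HZ; have fQL : row_free (liftL L Q) by rewrite /row_free mxrank_map.
have ZQ : (Z *m liftL L Q :=: Y)%MS.
  apply/eqmxP/andP; split.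
    by apply/row_subP => j; rewrite row_mul; apply/HZ; exact: row_sub.
  rewrite -(mulmxKpV YQ) submxMr //; apply/row_subP => j.
  by apply/HZ; rewrite -row_mul mulmxKpV ?row_sub.
split=> [|r]; first by rewrite -ZQ mxrankMfree.
by rewrite -(Mr_mul_free _ _ fQ); apply: Mr_eqmx ZQ.
Qed.

Lemma Mr_primary_component n (M : 'M[K]_n.+1) s (f : 'I_s -> {poly K})
    (nu : 'I_s -> nat) (C : 'M[L]_n.+1) i m a (P : 'M[K]_(a, n.+1))
    (Z : 'M[L]_a) :
  (forall i, f i \is monic /\ irreducible_poly (f i)) -> injective f ->
  char_poly M = \prod_(i < s) f i ^+ nu i ->
  row_free P -> (P == kerK (horner_mx M (f i ^+ m)))%MS ->
  (forall c : 'rV[L]_a, (c <= Z)%MS <->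
     (c *m liftL L P <= C :&: kerL L (horner_mx M (f i ^+ m)))%MS) ->
  let Y := (C :&: kerL L (horner_mx M (f i ^+ m)))%MS in
  [/\ \rank Z = \rank Y, forall r, Mr Z r = Mr Y r,
      (\rank Y <= nu i * (size (f i)).-1)%N &
      forall r, (r <= \rank Y)%N ->
        (Mr Y r <= nu i * (size (f i)).-1 - \rank Y + r)%N].
Proof.
move=> Hf finj Hchar fP PK HZ Y.
have YP : (Y <= liftL L P)%MS.
  rewrite (submx_trans (capmxSr _ _)) // /kerL /liftL map_trmx -map_kermx map_submx.
  by case/andP: PK.
have [rkZ MrZ] := coordinate_code fP YP HZ.
have aD : (a <= nu i * (size (f i)).-1)%N.
  rewrite -(eqP fP) (eqmx_rank PK) /kerK mxrank_ker mxrank_tr -mxrank_ker.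
  exact: rank_kermx_horner_irred Hf finj Hchar i m.
split=> [||| r rY]; rewrite -?rkZ ?(leq_trans (rank_leq_col Z)) //.
rewrite -MrZ; apply: leq_trans (Mr_Singleton _) _; first by rewrite rkZ.
by rewrite leq_add2r leq_sub2r.
Qed.

End MCode.
Theorem theorem3 (K : fieldType) (L : fieldExtType K) (n : nat)
  (Hm : (n.+1 <= \dim (fullv : {vspace L}))%N)
  (M : 'M[K]_n.+1) (s : nat) (f : 'I_s -> {poly K}) (mu nu : 'I_s -> nat)
  (Hf : forall i, f i \is monic /\ irreducible_poly (f i))
  (Hinj : injective f)
  (Hmu : forall i, (0 < mu i)%N) (Hnu : forall i, (0 < nu i)%N)
  (Hmin : mxminpoly M = \prod_(i < s) f i ^+ mu i)
  (Hchar : char_poly M = \prod_(i < s) f i ^+ nu i)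
  (d : 'I_s -> nat)
  (Hd : forall i, d i = \rank (kerK (horner_mx M (f i ^+ mu i))))
  (P : forall i, 'M[K]_(d i, n.+1))
  (HP : forall i, row_free (P i) /\ (P i == kerK (horner_mx M (f i ^+ mu i)))%MS)
  (C : 'M[L]_n.+1) (HC : is_Mcode M C) (Hk : (1 <= \rank C)%N)
  (Ci : forall i, 'M[L]_(d i))
  (HCi : forall i (c : 'rV[L]_(d i)),
     (c <= Ci i)%MS <->
     (c *m liftL L (P i) <= (C :&: kerL L (horner_mx M (f i ^+ mu i))))%MS) :
  let k := \rank C in
  let Cap := fun i => (C :&: kerL L (horner_mx M (f i ^+ mu i)))%MS in
  let ki := fun i => \rank (Cap i) in
  let Lam := [set i | ~~ (Cap i == (0 : 'M[L]_n.+1))%MS] in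
  let D := fun i => (nu i * (size (f i)).-1)%N in
  [/\ forall r, (1 <= r <= k)%N ->
        Mr C r = minsplit Lam ki r (fun i ri => Mr (Ci i) ri) /\
        Mr C r = minsplit Lam ki r (fun i ri => Mr (Cap i) ri),
      forall i, i \in Lam -> forall ri, (1 <= ri <= ki i)%N ->
        Mr (Ci i) ri = Mr (Cap i) ri /\ (Mr (Cap i) ri <= D i - ki i + ri)%N,
      forall r, (1 <= r <= k)%N ->
        (Mr C r <= minsplit Lam ki r
                     (fun i ri => if ri != 0%N then D i - ki i else 0%N) + r)%N,
      Mr C 1 = minidx Lam (fun i => Mr (Ci i) 1) /\
        (Mr C 1 <= minidx Lam (fun i => D i - ki i) + 1)%N &
      Mr C k = (\sum_(i in Lam) Mr (Ci i) (ki i))%N /\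
        (Mr C k <= \sum_(i in Lam) D i)%N].
Proof.
move=> k Cap ki Lam D.
have cop i j : i != j -> coprimep (f i ^+ mu i) (f j ^+ mu j).
  exact: coprimep_irred_exp.
have M0 : horner_mx M (\prod_i f i ^+ mu i) = 0 by rewrite -Hmin mx_root_minpoly.
have [e [eo ei es CeX dirX]] := Mcode_decomposition cop M0 HC.
have CapC i : (Cap i <= C)%MS := capmxSl _ _.
have ki0 i : i \notin Lam -> ki i = 0%N.
  by rewrite inE negbK => /andP[/submx0null Cap0 _]; rewrite /ki Cap0 mxrank0.
have ki_gt0 i : i \in Lam -> (0 < ki i)%N.
  by rewrite inE lt0n /ki mxrank_eq0; apply: contra => /eqP->; rewrite sub0mx.
have hk : k = (\sum_(i in Lam) ki i)%N.
  by rewrite /k (rank_decomp es CapC CeX dirX) [RHS]big_rmcond // => i /ki0.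
have hdec r : (r <= k)%N -> Mr C r = minsplit Lam ki r (fun i ri => Mr (Cap i) ri).
  exact: (Mr_decomp eo ei es CapC CeX dirX ki0).
have hCi i := Mr_primary_component Hf Hinj Hchar (HP i).1 (HP i).2 (HCi i).
have MrCi i r : Mr (Ci i) r = Mr (Cap i) r by case: (hCi i) => _ ->.
have eCi : (fun i ri => Mr (Ci i) ri) = (fun i ri => Mr (Cap i) ri).
  by apply/funext => i; apply/funext => ri; apply: MrCi.
have kiD i : (ki i <= D i)%N by case: (hCi i).
have sing i ri : (ri <= ki i)%N -> (Mr (Cap i) ri <= D i - ki i + ri)%N.
  by case: (hCi i) => _ _ _; apply.
have Lam0 : Lam != set0 by apply: contraTneq Hk => L0; rewrite -/k hk L0 big_set0.
split.
- by move=> r /andP[_ rk]; rewrite eCi -hdec.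
- by move=> i iL ri /andP[_ rk]; rewrite MrCi sing.
- move=> r /andP[_ rk]; rewrite hdec //; apply: minsplit_le_add => [|i ri _ rik].
    by apply: exists_split; rewrite -hk.
  by case: eqP => [->|_] /=; rewrite ?Mr0 ?sing.
- have MrC1 : Mr C 1 = minidx Lam (fun i => Mr (Ci i) 1%N).
    by rewrite hdec // -eCi minsplit1 // => i; exact: Mr0.
  split=> //; rewrite MrC1; apply: minidx_le_add => // i iL.
  by rewrite MrCi sing ?ki_gt0.
- have MrCk : Mr C k = (\sum_(i in Lam) Mr (Ci i) (ki i))%N.
    by rewrite {1}hk hdec ?hk // -eCi minsplit_full.
  split=> //; rewrite MrCk leq_sum // => i iL.
  by rewrite MrCi (leq_trans (sing i _ (leqnn _))) ?subnK ?kiD.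
Qed.
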